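(* Let $w, t \in \mathbb{Z}$ be such that $2w + t$ is a multiple of $4$. Then there exists a morphism $f \in \mathbb{ROT}\mathrm{ang}(\uparrow, \uparrow)$ such that $W(f) = w$ and $T(f) = t$, and such that $f$, viewed as a tangle, is related to the identity (a single straight strand) by a general isotopy, i.e.\ by planar isotopies and Reidemeister moves of types I, II and III.
   Context: $\mathbb{ROT}\mathrm{ang}$ is the free (strict) braided pivotal category generated by one object $\uparrow$, whose adjoint (left and right adjoints coincide) is denoted $\downarrow$; by Freyd–Yetter, its morphisms are oriented tangles up to regular isotopy (isotopy generated by planar isotopies and Reidemeister moves II and III, but not Reidemeister I). Strands are oriented according to whether they are labelled $\uparrow$ or $\downarrow$. The structural morphisms are four oriented caps/cups: $\mathrm{cap}_r : I \to \uparrow \otimes \downarrow$, $\mathrm{cap}_l : I \to \downarrow \otimes \uparrow$, $\mathrm{cup}_r : \downarrow \otimes \uparrow \to I$, $\mathrm{cup}_l : \uparrow \otimes \downarrow \to I$, satisfying all four yanking (zig-zag) equations. The writhe $W(f)$ of a morphism $f$ is the sum over all crossings (braidings) in its diagram of the sign of the crossing, where the braiding $\sigma$ between two strands of the same orientation counts $+1$ and its inverse $\sigma^{-1}$ counts $-1$ (the standard crossing sign of an oriented crossing). The turning number $T(f)$ is the sum over caps and cups in the diagram of their local turning numbers: $T(\mathrm{cap}_r) = +1$, $T(\mathrm{cap}_l) = -1$, $T(\mathrm{cup}_r) = -1$, $T(\mathrm{cup}_l) = +1$. Both $W$ and $T$ are invariant under the axioms of $\mathbb{ROT}\mathrm{ang}$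 and additive under composition. *)

(* Syntactic presentation of oriented tangle diagrams
   (morphisms of the free strict braided pivotal category ROTang generated
   by one object "up" with two-sided dual "down"), their writhe and turning
   number, and the isotopy relations (regular isotopy = axioms of a strict
   braided pivotal category; general isotopy = those plus Reidemeister I). *)
From mathcomp Require Import all_boot all_algebra.
Set Implicit Arguments. Unset Strict Implicit. Unset Printing Implicit Defensive.
Import GRing.Theory.
Local Open Scope ring_scope.

Definition obj := seq bool.
Definition up : bool := true.
Definition down : bool := false.

(* Raw diagram terms.  tcomp f g = "first f, then g" (diagrammatic order). *)
Inductive tangle : Type :=
| tid (a : obj)
| tcomp (f g : tangle)
| ttens (f g : tangle)
| tbr (x y : bool)
| tbrI (x y : bool)
| capr
| capl
| cupr
| cupl.

Inductive typed : tangle -> obj -> obj -> Prop :=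
| ty_id a : typed (tid a) a a
| ty_comp f g a b c : typed f a b -> typed g b c -> typed (tcomp f g) a c
| ty_tens f g a b c d : typed f a b -> typed g c d -> typed (ttens f g) (a ++ c) (b ++ d)
| ty_br x y : typed (tbr x y) [:: x; y] [:: y; x]
| ty_brI x y : typed (tbrI x y) [:: y; x] [:: x; y]
| ty_capr : typed capr [::] [:: up; down]
| ty_capl : typed capl [::] [:: down; up]
| ty_cupr : typed cupr [:: down; up] [::]
| ty_cupl : typed cupl [:: up; down] [::].

(* Writhe: sum of crossing signs.  A braiding of two strands of the same
   orientation counts +1; reversing one strand flips the sign; the inverse
   braiding has the opposite sign. *)
Definition cross_sign (x y : bool) : int := if x == y then 1 else -1.

Fixpoint writhe (f : tangle) : int :=
  match f with
  | tid _ => 0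
  | tcomp f g => writhe f + writhe g
  | ttens f g => writhe f + writhe g
  | tbr x y => cross_sign x y
  | tbrI x y => - cross_sign x y
  | _ => 0
  end.

Fixpoint turning (f : tangle) : int :=
  match f with
  | tcomp f g => turning f + turning g
  | ttens f g => turning f + turning g
  | capr => 1
  | capl => -1
  | cupr => -1
  | cupl => 1
  | _ => 0
  end.

(* Braiding on compound objects (defined via the hexagon identities). *)
Fixpoint braidx (x : bool) (b : obj) : tangle :=  (* x :: b -> b ++ [:: x] *)
  match b with
  | [::] => tid [:: x]
  | y :: b' => tcomp (ttens (tbr x y) (tid b')) (ttens (tid [:: y]) (braidx x b'))
  end.

Fixpoint braid (a b : obj) : tangle :=  (* a ++ b -> b ++ a *)
  match a with
  | [::] => tid b
  | x :: a' => tcomp (ttens (tid [:: x]) (braid a' b)) (ttens (braidx x b) (tid a'))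
  end.

Definition dual (a : obj) : obj := rev (map negb a).

(* "R" duality: coev : I -> x x*, ev : x* x -> I *)
Definition coevR (x : bool) := if x then capr else capl.
Definition evR (x : bool) := if x then cupr else cupl.
(* "L" duality: coev : I -> x* x, ev : x x* -> I *)
Definition coevL (x : bool) := if x then capl else capr.
Definition evL (x : bool) := if x then cupl else cupr.

Fixpoint coevRs (a : obj) : tangle :=  (* I -> a ++ dual a *)
  match a with
  | [::] => tid [::]
  | x :: a' => tcomp (coevR x) (ttens (tid [:: x]) (ttens (coevRs a') (tid [:: negb x])))
  end.
Fixpoint evRs (a : obj) : tangle :=  (* dual a ++ a -> I *)
  match a with
  | [::] => tid [::]
  | x :: a' => tcomp (ttens (tid (dual a')) (ttens (evR x) (tid a'))) (evRs a')
  end.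
Fixpoint coevLs (a : obj) : tangle :=  (* I -> dual a ++ a *)
  match a with
  | [::] => tid [::]
  | x :: a' => tcomp (coevLs a') (ttens (tid (dual a')) (ttens (coevL x) (tid a')))
  end.
Fixpoint evLs (a : obj) : tangle :=  (* a ++ dual a -> I *)
  match a with
  | [::] => tid [::]
  | x :: a' => tcomp (ttens (tid [:: x]) (ttens (evLs a') (tid [:: negb x]))) (evL x)
  end.

(* The two mates (duals) of f : a -> b, both of type dual b -> dual a. *)
Definition mateR (a b : obj) (f : tangle) : tangle :=
  tcomp (ttens (tid (dual b)) (coevRs a))
    (tcomp (ttens (tid (dual b)) (ttens f (tid (dual a))))
           (ttens (evRs b) (tid (dual a)))).
Definition mateL (a b : obj) (f : tangle) : tangle :=
  tcomp (ttens (coevLs a) (tid (dual b)))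
    (tcomp (ttens (tid (dual a)) (ttens f (tid (dual b))))
           (ttens (tid (dual a)) (evLs b))).

Inductive ax_reg : tangle -> tangle -> Prop :=
| ax_assoc f g h a b c d : typed f a b -> typed g b c -> typed h c d ->
    ax_reg (tcomp (tcomp f g) h) (tcomp f (tcomp g h))
| ax_idl f a b : typed f a b -> ax_reg (tcomp (tid a) f) f
| ax_idr f a b : typed f a b -> ax_reg (tcomp f (tid b)) f
| ax_tassoc f g h a b c d e k : typed f a b -> typed g c d -> typed h e k ->
    ax_reg (ttens (ttens f g) h) (ttens f (ttens g h))
| ax_tunitl f a b : typed f a b -> ax_reg (ttens (tid [::]) f) f
| ax_tunitr f a b : typed f a b -> ax_reg (ttens f (tid [::])) f
| ax_tid a b : ax_reg (ttens (tid a) (tid b)) (tid (a ++ b))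
| ax_interchange f g f' g' a b c a' b' c' :
    typed f a b -> typed g b c -> typed f' a' b' -> typed g' b' c' ->
    ax_reg (ttens (tcomp f g) (tcomp f' g')) (tcomp (ttens f f') (ttens g g'))
| ax_brinv1 x y : ax_reg (tcomp (tbr x y) (tbrI x y)) (tid [:: x; y])
| ax_brinv2 x y : ax_reg (tcomp (tbrI x y) (tbr x y)) (tid [:: y; x])
| ax_natl f a a' b : typed f a a' ->
    ax_reg (tcomp (ttens f (tid b)) (braid a' b)) (tcomp (braid a b) (ttens (tid b) f))
| ax_natr g a b b' : typed g b b' ->
    ax_reg (tcomp (ttens (tid a) g) (braid a b')) (tcomp (braid a b) (ttens g (tid a)))
| ax_zzR1 x : ax_reg (tcomp (ttens (coevR x) (tid [:: x])) (ttens (tid [:: x]) (evR x))) (tid [:: x])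
| ax_zzR2 x : ax_reg (tcomp (ttens (tid [:: negb x]) (coevR x)) (ttens (evR x) (tid [:: negb x])))
                     (tid [:: negb x])
| ax_zzL1 x : ax_reg (tcomp (ttens (tid [:: x]) (coevL x)) (ttens (evL x) (tid [:: x]))) (tid [:: x])
| ax_zzL2 x : ax_reg (tcomp (ttens (coevL x) (tid [:: negb x])) (ttens (tid [:: negb x]) (evL x)))
                     (tid [:: negb x])
| ax_pivotal f a b : typed f a b -> ax_reg (mateR a b f) (mateL a b f).

Inductive ax_R1 : tangle -> tangle -> Prop :=
| r1_right x c : c = tbr x x \/ c = tbrI x x ->
    ax_R1 (tcomp (ttens (tid [:: x]) (coevR x))
            (tcomp (ttens c (tid [:: negb x])) (ttens (tid [:: x]) (evL x)))) (tid [:: x])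
| r1_left x c : c = tbr x x \/ c = tbrI x x ->
    ax_R1 (tcomp (ttens (coevL x) (tid [:: x]))
            (tcomp (ttens (tid [:: negb x]) c) (ttens (evR x) (tid [:: x])))) (tid [:: x]).

Inductive cong_closure (R : tangle -> tangle -> Prop) : tangle -> tangle -> Prop :=
| cc_ax f g : R f g -> cong_closure R f g
| cc_refl f : cong_closure R f f
| cc_sym f g : cong_closure R f g -> cong_closure R g f
| cc_trans f g h : cong_closure R f g -> cong_closure R g h -> cong_closure R f h
| cc_comp f f' g g' : cong_closure R f f' -> cong_closure R g g' ->
    cong_closure R (tcomp f g) (tcomp f' g')
| cc_tens f f' g g' : cong_closure R f f' -> cong_closure R g g' ->
    cong_closure R (ttens f g) (ttens f' g').

(* Regular isotopy: equality of morphisms in ROTang. *)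
Definition reg_iso := cong_closure ax_reg.
(* General isotopy: planar isotopy + Reidemeister I, II, III. *)
Definition gen_iso := cong_closure (fun f g => ax_reg f g \/ ax_R1 f g).

From mathcomp Require Import all_boot all_algebra.
From mathcomp Require Import zify ring.
Set Implicit Arguments. Unset Strict Implicit. Unset Printing Implicit Defensive.
Import GRing.Theory.
Local Open Scope ring_scope.

(* A Reidemeister I curl on an upward strand is generally isotopic to the
   identity; a curl on the right has turning number 2, one on the left -2, and
   its writhe is the sign (+1 or -1) of its crossing.  Composing k right curls
   of writhe 1 with w - k left curls of writhe 1 (negative counts being
   realised by the curls with the inverse crossing) gives writhe w and turning
   number 4k - 2w, and every t with 4 | 2w + t has this form. *)

Definition realizable (a : obj) (w t : int) : Prop :=
  exists f : tangle,
    typed f a a /\ writhe f = w /\ turning f = t /\ gen_iso f (tid a).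

Section Realizable.

Variable a : obj.

Lemma realizable0 : realizable a 0 0.
Proof. by exists (tid a); do !split; [constructor | apply: cc_refl]. Qed.

Lemma realizableD w1 t1 w2 t2 :
  realizable a w1 t1 -> realizable a w2 t2 -> realizable a (w1 + w2) (t1 + t2).
Proof.
move=> [f [Tf [Wf [Uf If]]]] [g [Tg [Wg [Ug Ig]]]].
exists (tcomp f g); split; first exact: ty_comp Tf Tg.
split; first by rewrite /= Wf Wg.
split; first by rewrite /= Uf Ug.
apply: cc_trans (cc_comp If Ig) _.
by apply: cc_ax; left; apply: (@ax_idl _ a a); constructor.
Qed.

Lemma realizableMn w t n : realizable a w t -> realizable a (w *+ n) (t *+ n).
Proof.
move=> R; elim: n => [|n IHn]; first exact: realizable0.
by rewrite !mulrS; apply: realizableD.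
Qed.

Lemma realizableMz w t (k : int) :
  realizable a w t -> realizable a (- w) (- t) -> realizable a (k * w) (k * t).
Proof.
move=> R Rn; case: k => n.
  by rewrite -natz !mulr_natl; apply: realizableMn.
by rewrite NegzE !mulNr -!mulrN -natz !mulr_natl; apply: realizableMn.
Qed.

End Realizable.

Definition curlR (x : bool) (c : tangle) : tangle :=
  tcomp (ttens (tid [:: x]) (coevR x))
    (tcomp (ttens c (tid [:: negb x])) (ttens (tid [:: x]) (evL x))).

Definition curlL (x : bool) (c : tangle) : tangle :=
  tcomp (ttens (coevL x) (tid [:: x]))
    (tcomp (ttens (tid [:: negb x]) c) (ttens (evR x) (tid [:: x]))).

Lemma typed_curlR x c : typed c [:: x; x] [:: x; x] -> typed (curlR x c) [:: x] [:: x].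
Proof.
move=> Tc; apply: (@ty_comp _ _ _ [:: x; x; negb x]).
  by apply: (@ty_tens _ _ [:: x] [:: x] [::] [:: x; negb x]); case: x {Tc}; constructor.
apply: (@ty_comp _ _ _ [:: x; x; negb x]).
  exact: (@ty_tens _ _ [:: x; x] [:: x; x] [:: negb x] [:: negb x]) Tc (ty_id _).
by apply: (@ty_tens _ _ [:: x] [:: x] [:: x; negb x] [::]); case: x {Tc}; constructor.
Qed.

Lemma typed_curlL x c : typed c [:: x; x] [:: x; x] -> typed (curlL x c) [:: x] [:: x].
Proof.
move=> Tc; apply: (@ty_comp _ _ _ [:: negb x; x; x]).
  by apply: (@ty_tens _ _ [::] [:: negb x; x] [:: x] [:: x]); case: x {Tc}; constructor.
apply: (@ty_comp _ _ _ [:: negb x; x; x]).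
  exact: (@ty_tens _ _ [:: negb x] [:: negb x] [:: x; x] [:: x; x]) (ty_id _) Tc.
by apply: (@ty_tens _ _ [:: negb x; x] [::] [:: x] [:: x]); case: x {Tc}; constructor.
Qed.

Lemma realizable_curlR c :
  c = tbr up up \/ c = tbrI up up -> realizable [:: up] (writhe c) 2.
Proof.
move=> Hc; exists (curlR up c); split.
  by apply: typed_curlR; case: Hc => ->; constructor.
split; first by rewrite /= !(addr0, add0r).
split; first by case: Hc => ->.
by apply: cc_ax; right; apply: r1_right.
Qed.

Lemma realizable_curlL c :
  c = tbr up up \/ c = tbrI up up -> realizable [:: up] (writhe c) (-2).
Proof.
move=> Hc; exists (curlL up c); split.
  by apply: typed_curlL; case: Hc => ->; constructor.
split; first by rewrite /= !(addr0, add0r).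
split; first by case: Hc => ->.
by apply: cc_ax; right; apply: r1_left.
Qed.

Theorem mainTheorem1 (w t : int) :
  (4 %| 2 * w + t)%Z ->
  exists f : tangle,
    typed f [:: up] [:: up] /\ writhe f = w /\ turning f = t /\
    gen_iso f (tid [:: up]).
Proof.
move=> /dvdzP [k Hk].
have right_curls : realizable [:: up] (k * 1) (k * 2).
  apply: realizableMz; first exact: (@realizable_curlR (tbr up up) (or_introl erefl)).
  exact: (@realizable_curlL (tbrI up up) (or_intror erefl)).
have left_curls : realizable [:: up] ((w - k) * 1) ((w - k) * -2).
  apply: realizableMz; first exact: (@realizable_curlL (tbr up up) (or_introl erefl)).
  exact: (@realizable_curlR (tbrI up up) (or_intror erefl)).
have := realizableD right_curls left_curls.
have -> : k * 1 + (w - k) * 1 = w by ring.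
by have -> : k * 2 + (w - k) * -2 = t by lia.
Qed.
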